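(* Let $M_1$ and $M_2$ be matroids on disjoint finite ground sets $E_1$ and $E_2$, of ranks $r_1$ and $r_2$. Then $P(M_1\oplus M_2)$ has a nontrivial hyperplane split if and only if $P(M_1)$ or $P(M_2)$ has a nontrivial hyperplane split.
   Context: The direct sum $M_1\oplus M_2$ is the matroid on $E_1\cup E_2$ with bases $\{B_1\cup B_2: B_1\in\mathcal{B}(M_1), B_2\in\mathcal{B}(M_2)\}$. For a matroid $N$ on a finite set $E$, $P(N)=\mathrm{conv}\{\sum_{i\in B}e_i : B \text{ a base of } N\}\subset\mathbb{R}^E$, $e_i$ the standard basis vectors. A hyperplane split of $P(N)$ is an expression $P(N)=P(N_1)\cup P(N_2)$ with $N_1,N_2$ matroids on $E$ such that $P(N_1)\cap P(N_2)$ is a face of both $P(N_1)$ and $P(N_2)$; it is nontrivial if $P(N_1)\neq P(N)$ and $P(N_2)\neq P(N)$. *)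

From HB Require Import structures.
From mathcomp Require Import all_boot all_order all_algebra.
Set Implicit Arguments. Unset Strict Implicit. Unset Printing Implicit Defensive.
Import Order.TTheory GRing.Theory Num.Theory.
Local Open Scope ring_scope.

Definition is_matroid (E : finType) (Bs : {set {set E}}) : Prop :=
  Bs != set0 /\
  forall B1 B2, B1 \in Bs -> B2 \in Bs ->
    forall x, x \in B1 :\: B2 ->
      exists2 y, y \in B2 :\: B1 & y |: (B1 :\ x) \in Bs.

Definition direct_sum_bases (E1 E2 : finType)
  (Bs1 : {set {set E1}}) (Bs2 : {set {set E2}}) : {set {set (E1 + E2)%type}} :=
  [set ((@inl E1 E2) @: B1) :|: ((@inr E1 E2) @: B2) | B1 : {set E1} in Bs1, B2 : {set E2} in Bs2].

(* Points of R^E are functions E -> R; subsets of R^E are predicates. *)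
Definition indicator (R : realFieldType) (E : finType) (B : {set E}) : E -> R :=
  fun i => (i \in B)%:R.

Definition base_polytope (R : realFieldType) (E : finType) (Bs : {set {set E}})
  (x : E -> R) : Prop :=
  exists lam : {set E} -> R,
    (forall B, B \in Bs -> 0 <= lam B) /\
    \sum_(B in Bs) lam B = 1 /\
    (forall i, x i = \sum_(B in Bs) lam B * indicator R B i).

Arguments indicator R {E} B i.
Arguments base_polytope R {E} Bs x.

Definition is_face (R : realFieldType) (E : finType) (P F : (E -> R) -> Prop) : Prop :=
  exists (c : E -> R) (b : R),
    (forall x, P x -> \sum_i c i * x i <= b) /\
    (forall x, F x <-> (P x /\ \sum_i c i * x i = b)).

Definition same_set (R : realFieldType) (E : finType) (P Q : (E -> R) -> Prop) : Prop :=
  forall x, P x <-> Q x.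

Definition hyperplane_split (R : realFieldType) (E : finType)
  (Bs Bs1 Bs2 : {set {set E}}) : Prop :=
  is_matroid Bs1 /\ is_matroid Bs2 /\
  same_set (base_polytope R Bs)
    (fun x => base_polytope R Bs1 x \/ base_polytope R Bs2 x) /\
  is_face (base_polytope R Bs1)
    (fun x => base_polytope R Bs1 x /\ base_polytope R Bs2 x) /\
  is_face (base_polytope R Bs2)
    (fun x => base_polytope R Bs1 x /\ base_polytope R Bs2 x).

Arguments hyperplane_split R {E} Bs Bs1 Bs2.

Definition has_nontrivial_hyperplane_split (R : realFieldType) (E : finType)
  (Bs : {set {set E}}) : Prop :=
  exists Bs1 Bs2 : {set {set E}},
    hyperplane_split R Bs Bs1 Bs2 /\
    ~ same_set (base_polytope R Bs1) (base_polytope R Bs) /\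
    ~ same_set (base_polytope R Bs2) (base_polytope R Bs).

Arguments has_nontrivial_hyperplane_split R {E} Bs.

From HB Require Import structures.
From mathcomp Require Import all_boot all_order all_algebra.
From Stdlib Require Import Setoid.
Set Implicit Arguments. Unset Strict Implicit. Unset Printing Implicit Defensive.
Import Order.TTheory GRing.Theory Num.Theory.
Local Open Scope ring_scope.

(* The easy direction lifts a split P(M1) = P(N1) u P(N2) to the split
   P(M1 (+) M2) = P(N1 (+) M2) u P(N2 (+) M2): since P(N (+) M2) = P(N) x P(M2),
   faces and unions transfer along the projection onto R^E1 and a section of it
   (lemma [split_transfer], instantiated in [split_left_factor] and
   [split_right_factor]).

   For the converse, a split only involves bases of the split polytope (a 0/1
   point of a base polytope is a base, [base_of_indicator]), so the two pieces
   are matroids whose bases are bases of M1 (+) M2.  By basis exchange, every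
   such matroid is itself a direct sum S (+) T ([direct_sum_submatroid]).
   Finally, if two proper "rectangles" S1 x T1 and S2 x T2 cover A x B, they
   share a full side ([rectangle_cover]); so the split has one of the two lifted
   shapes above and descends to a split of M1 or of M2. *)

Definition dsum_base (E1 E2 : finType) (a : {set E1}) (y : {set E2}) :
  {set (E1 + E2)%type} := (@inl E1 E2 @: a) :|: (@inr E1 E2 @: y).

Section DirectSumBases.
Variables E1 E2 : finType.
Implicit Types (a : {set E1}) (y : {set E2}) (S : {set {set E1}}) (T : {set {set E2}}).

Lemma in_dsum_base_l a y u : (inl u \in dsum_base a y) = (u \in a).
Proof.
rewrite /dsum_base in_setU mem_imset; last by move=> ? ? [->].
have /negbTE -> : inl u \notin @inr E1 E2 @: y by apply/imsetP => -[].
by rewrite orbF.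
Qed.

Lemma in_dsum_base_r a y v : (inr v \in dsum_base a y) = (v \in y).
Proof.
rewrite /dsum_base in_setU [inr v \in @inr E1 E2 @: _]mem_imset; last by move=> ? ? [->].
by have /negbTE -> : inr v \notin @inl E1 E2 @: a by apply/imsetP => -[].
Qed.

Definition in_dsum_base := (in_dsum_base_l, in_dsum_base_r).

Lemma dsum_base_inj a a' y y' : dsum_base a y = dsum_base a' y' -> a = a' /\ y = y'.
Proof.
move=> e; split; apply/setP => u.
  by rewrite -(in_dsum_base_l a y) e in_dsum_base_l.
by rewrite -(in_dsum_base_r a y) e in_dsum_base_r.
Qed.

Lemma mem_direct_sum_bases S T B :
  B \in direct_sum_bases S T <-> exists a y, [/\ a \in S, y \in T & B = dsum_base a y].
Proof.
split; first by case/imset2P => a y aS yT ->; exists a, y.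
by case=> a [y [aS yT ->]]; apply/imset2P; exists a y.
Qed.

Lemma dsum_base_in S T a y :
  (dsum_base a y \in direct_sum_bases S T) = (a \in S) && (y \in T).
Proof.
apply/idP/andP => [/mem_direct_sum_bases [a' [y' [aS yT /dsum_base_inj [-> ->]]]] //|].
by case=> aS yT; apply/mem_direct_sum_bases; exists a, y.
Qed.

Lemma big_direct_sum_bases (R : nmodType) S T (F : {set (E1 + E2)%type} -> R) :
  \sum_(B in direct_sum_bases S T) F B = \sum_(a in S) \sum_(y in T) F (dsum_base a y).
Proof.
rewrite /direct_sum_bases curry_imset2X big_imset /=; last first.
  by move=> [a y] [a' y'] _ _ /= /dsum_base_inj [-> ->].
by rewrite pair_big /=; apply: eq_big => [[a y]|[a y] _ //]; rewrite in_setX.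
Qed.

Lemma direct_sum_bases_inj_l S S' T :
  T != set0 -> (direct_sum_bases S T == direct_sum_bases S' T) = (S == S').
Proof.
case/set0Pn=> y yT; apply/eqP/eqP => [e|->//]; apply/setP => a.
by rewrite -[a \in S]andbT -yT -dsum_base_in e dsum_base_in yT andbT.
Qed.

Lemma direct_sum_bases_inj_r S T T' :
  S != set0 -> (direct_sum_bases S T == direct_sum_bases S T') = (T == T').
Proof.
case/set0Pn=> a aS; apply/eqP/eqP => [e|->//]; apply/setP => y.
by rewrite -[y \in T]andTb -aS -dsum_base_in e dsum_base_in aS.
Qed.

End DirectSumBases.

Section DirectSumPolytope.
Variables (R : realFieldType) (E1 E2 : finType).
Variables (S : {set {set E1}}) (T : {set {set E2}}).

Lemma direct_sum_polytope_proj (x : (E1 + E2)%type -> R) :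
  base_polytope R (direct_sum_bases S T) x ->
  base_polytope R S (fun u => x (inl u)) /\ base_polytope R T (fun v => x (inr v)).
Proof.
case=> lam [lam_ge0 [lam_sum1 xE]]; split.
  exists (fun a => \sum_(y in T) lam (dsum_base a y)); split; [|split].
  - by move=> a aS; apply: sumr_ge0 => y yT; apply: lam_ge0; rewrite dsum_base_in aS.
  - by rewrite -big_direct_sum_bases.
  - move=> u; rewrite xE big_direct_sum_bases; apply: eq_bigr => a _.
    by rewrite mulr_suml; apply: eq_bigr => y _; rewrite /indicator in_dsum_base.
exists (fun y => \sum_(a in S) lam (dsum_base a y)); split; [|split].
- by move=> y yT; apply: sumr_ge0 => a aS; apply: lam_ge0; rewrite dsum_base_in aS.
- by rewrite -exchange_big -big_direct_sum_bases.
- move=> v; rewrite xE big_direct_sum_bases exchange_big; apply: eq_bigr => y _.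
  by rewrite mulr_suml; apply: eq_bigr => a _; rewrite /indicator in_dsum_base.
Qed.

(* Conversely, the product weights la a * mu y combine the bases a (+) y. *)
Lemma direct_sum_polytope_prod (x : (E1 + E2)%type -> R) :
  base_polytope R S (fun u => x (inl u)) -> base_polytope R T (fun v => x (inr v)) ->
  base_polytope R (direct_sum_bases S T) x.
Proof.
case=> la [la_ge0 [la_sum1 x1E]] [mu [mu_ge0 [mu_sum1 x2E]]].
pose w a y := la a * mu y.
have wE a y : w (@inl E1 E2 @^-1: dsum_base a y) (inr @^-1: dsum_base a y) = w a y.
  by congr w; apply/setP => z; rewrite inE in_dsum_base.
exists (fun B : {set (E1 + E2)%type} => w (inl @^-1: B) (inr @^-1: B)); split; [|split].
- move=> B /mem_direct_sum_bases [a [y [aS yT ->]]].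
  by rewrite wE mulr_ge0 ?la_ge0 ?mu_ge0.
- rewrite big_direct_sum_bases -la_sum1; apply: eq_bigr => a _.
  by under eq_bigr => y _ do rewrite wE; rewrite -mulr_sumr mu_sum1 mulr1.
- case=> [u|v]; rewrite big_direct_sum_bases.
    rewrite x1E; apply: eq_bigr => a _.
    under eq_bigr => y _ do rewrite wE /indicator in_dsum_base /w mulrAC.
    by rewrite -mulr_sumr mu_sum1 mulr1.
  rewrite x2E exchange_big; apply: eq_bigr => y _.
  under eq_bigr => a _ do rewrite wE /indicator in_dsum_base /w -mulrA mulrC.
  by rewrite -mulr_sumr la_sum1 mulr1.
Qed.

Lemma base_polytope_direct_sum (x : (E1 + E2)%type -> R) :
  base_polytope R (direct_sum_bases S T) x <->
  base_polytope R S (fun u => x (inl u)) /\ base_polytope R T (fun v => x (inr v)).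
Proof.
by split=> [|[]]; [exact: direct_sum_polytope_proj | exact: direct_sum_polytope_prod].
Qed.

End DirectSumPolytope.

Lemma convex_comb_bool (R : realFieldType) (I : finType) (S : {set I})
    (lam : I -> R) (f : I -> bool) (b : bool) :
  (forall C, C \in S -> 0 <= lam C) -> \sum_(C in S) lam C = 1 ->
  \sum_(C in S) lam C * (f C)%:R = b%:R ->
  forall C, C \in S -> 0 < lam C -> f C = b.
Proof.
move=> lam_ge0 lam_sum1 fE C CS lamC.
have zero_term (g : I -> R) : (forall C, C \in S -> 0 <= g C) ->
    \sum_(C in S) lam C * g C = 0 -> g C = 0.
  move=> g_ge0 gsum.
  have terms_ge0 C' : C' \in S -> 0 <= lam C' * g C'.
    by move=> C'S; rewrite mulr_ge0 ?lam_ge0 ?g_ge0.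
  move: (psumr_eq0P terms_ge0 gsum CS) => /eqP.
  by rewrite mulf_eq0 (gt_eqF lamC) => /eqP.
case: b fE => fE.
  have : 1 - (f C)%:R = 0 :> R.
    apply: (zero_term (fun C => 1 - (f C)%:R)) => [C' _|].
      by case: (f C'); rewrite ?subrr ?subr0.
    under eq_bigr => C' _ do rewrite mulrBr mulr1.
    by rewrite sumrB lam_sum1 fE subrr.
  by case: (f C) => //; rewrite subr0 => /eqP; rewrite oner_eq0.
have : (f C)%:R = 0 :> R.
  by apply: (zero_term (fun C => (f C)%:R)) => // C' _; rewrite ler0n.
by case: (f C) => // /eqP; rewrite oner_eq0.
Qed.

Section Vertices.
Variables (R : realFieldType) (E : finType).
Implicit Types (S T Bs N : {set {set E}}) (B : {set E}).

Lemma indicator_base_polytope S B : B \in S -> base_polytope R S (indicator R B).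
Proof.
move=> BS; exists (fun C => (C == B)%:R); split; [|split].
- by move=> C _; rewrite ler0n.
- by rewrite (bigD1 B) //= eqxx big1 ?addr0 // => C /andP[_ /negbTE ->].
- move=> i; rewrite (bigD1 B) //= eqxx mul1r big1 ?addr0 // => C /andP[_ /negbTE ->].
  by rewrite mul0r.
Qed.

Lemma base_of_indicator S B : base_polytope R S (indicator R B) -> B \in S.
Proof.
case=> lam [lam_ge0 [lam_sum1 BE]].
have [C CS lamC] : exists2 C, C \in S & 0 < lam C.
  have : \sum_(C in S) lam C != 0 by rewrite lam_sum1 oner_neq0.
  rewrite psumr_neq0 // => /hasP [C _ /andP [CS lamC]]; by exists C.
suff -> : B = C by [].
apply/setP => i; apply/esym.
have BiE : \sum_(C in S) lam C * (i \in C)%:R = (i \in B)%:R by rewrite -BE.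
exact: (convex_comb_bool lam_ge0 lam_sum1 BiE CS lamC).
Qed.

Lemma base_polytope_same S T : same_set (base_polytope R S) (base_polytope R T) <-> S = T.
Proof.
split=> [same|-> //]; apply/setP => B.
by apply/idP/idP => /indicator_base_polytope /same /base_of_indicator.
Qed.

Lemma nontrivial_splitE Bs :
  has_nontrivial_hyperplane_split R Bs <->
  exists N1 N2, [/\ hyperplane_split R Bs N1 N2, N1 != Bs & N2 != Bs].
Proof.
split.
  case=> N1 [N2 [hs [n1 n2]]]; exists N1, N2; split=> //; apply/eqP => N_eq.
    by apply: n1; apply/base_polytope_same.
  by apply: n2; apply/base_polytope_same.
case=> N1 [N2 [hs n1 n2]]; exists N1, N2.
by split=> //; split=> /base_polytope_same; apply/eqP.
Qed.

Lemma split_bases Bs N1 N2 : hyperplane_split R Bs N1 N2 ->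
  [/\ {subset N1 <= Bs}, {subset N2 <= Bs} &
      forall B, B \in Bs -> (B \in N1) || (B \in N2)].
Proof.
case=> _ [_ [union _]]; split.
- by move=> B /indicator_base_polytope BN1; apply: base_of_indicator; apply/union; left.
- by move=> B /indicator_base_polytope BN2; apply: base_of_indicator; apply/union; right.
move=> B /indicator_base_polytope /union [] /base_of_indicator ->; rewrite ?orbT //.
Qed.

End Vertices.

Lemma matroid_antichain (E : finType) (Bs : {set {set E}}) B B' :
  is_matroid Bs -> B \in Bs -> B' \in Bs -> B \subset B' -> B = B'.
Proof.
case=> _ exchange BBs B'Bs sub; apply/eqP; rewrite eqEsubset sub /=.
apply/subsetP => x xB'; apply/negPn/negP => xB.
have [y] := exchange B' B B'Bs BBs x (introT setDP (conj xB' xB)).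
by case/setDP=> yB /negP []; apply: (subsetP sub).
Qed.

Section DirectSumMatroid.
Variables E1 E2 : finType.
Implicit Types (a : {set E1}) (y : {set E2}) (S : {set {set E1}}) (T : {set {set E2}}).

Lemma dsum_base_exchange_l a y u w :
  inl w |: (dsum_base a y :\ inl u) = dsum_base (w |: (a :\ u)) y.
Proof. by apply/setP => -[p|p]; rewrite !(in_setU1, in_setD1, in_dsum_base). Qed.

Lemma dsum_base_exchange_r a y v w :
  inr w |: (dsum_base a y :\ inr v) = dsum_base a (w |: (y :\ v)).
Proof. by apply/setP => -[p|p]; rewrite !(in_setU1, in_setD1, in_dsum_base). Qed.

Lemma dsum_base_exchange_lr a y v w :
  inl w |: (dsum_base a y :\ inr v) = dsum_base (w |: a) (y :\ v).
Proof. by apply/setP => -[p|p]; rewrite !(in_setU1, in_setD1, in_dsum_base). Qed.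

Lemma direct_sum_matroid S T :
  is_matroid S -> is_matroid T -> is_matroid (direct_sum_bases S T).
Proof.
case=> /set0Pn [a aS] exS [/set0Pn [y yT] exT]; split.
  by apply/set0Pn; exists (dsum_base a y); rewrite dsum_base_in aS.
move=> B1 B2 /mem_direct_sum_bases [a1 [y1 [a1S y1T ->]]].
move=> /mem_direct_sum_bases [a2 [y2 [a2S y2T ->]]] [u|v];
  rewrite in_setD !in_dsum_base -in_setD.
  move=> ua; have [w /setDP [wa2 wa1] wS] := exS a1 a2 a1S a2S u ua.
  exists (inl w); first by rewrite in_setD !in_dsum_base wa1 wa2.
  by rewrite dsum_base_exchange_l dsum_base_in wS y1T.
move=> vy; have [w /setDP [wy2 wy1] wT] := exT y1 y2 y1T y2T v vy.
exists (inr w); first by rewrite in_setD !in_dsum_base wy1 wy2.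
by rewrite dsum_base_exchange_r dsum_base_in wT a1S.
Qed.

Lemma direct_sum_matroid_factors S T :
  is_matroid (direct_sum_bases S T) -> is_matroid S /\ is_matroid T.
Proof.
case=> /set0Pn [B /mem_direct_sum_bases [a0 [y0 [a0S y0T _]]]] exD; split; split.
- by apply/set0Pn; exists a0.
- move=> a1 a2 a1S a2S u ua.
  have D1 : dsum_base a1 y0 \in direct_sum_bases S T by rewrite dsum_base_in a1S.
  have D2 : dsum_base a2 y0 \in direct_sum_bases S T by rewrite dsum_base_in a2S.
  have uD : inl u \in dsum_base a1 y0 :\: dsum_base a2 y0.
    by rewrite in_setD !in_dsum_base -in_setD.
  have [[w|w]] := exD _ _ D1 D2 _ uD; rewrite in_setD !in_dsum_base ?andNb //.
  case/andP=> wa2 wa1; rewrite dsum_base_exchange_l dsum_base_in => /andP [wS _].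
  by exists w; rewrite // in_setD wa1 wa2.
- by apply/set0Pn; exists y0.
move=> y1 y2 y1T y2T v vy.
have D1 : dsum_base a0 y1 \in direct_sum_bases S T by rewrite dsum_base_in a0S.
have D2 : dsum_base a0 y2 \in direct_sum_bases S T by rewrite dsum_base_in a0S.
have vD : inr v \in dsum_base a0 y1 :\: dsum_base a0 y2.
  by rewrite in_setD !in_dsum_base -in_setD.
have [[w|w]] := exD _ _ D1 D2 _ vD; rewrite in_setD !in_dsum_base ?andNb //.
case/andP=> wy2 wy1; rewrite dsum_base_exchange_r dsum_base_in => /andP [_ wT].
by exists w; rewrite // in_setD wy1 wy2.
Qed.

End DirectSumMatroid.

Section Submatroid.
Variables (E1 E2 : finType) (Bs1 : {set {set E1}}) (Bs2 : {set {set E2}}).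
Variable N : {set {set (E1 + E2)%type}}.
Hypotheses (m1 : is_matroid Bs1) (m2 : is_matroid Bs2) (mN : is_matroid N).
Hypothesis subN : {subset N <= direct_sum_bases Bs1 Bs2}.

Lemma submatroid_factors a y : dsum_base a y \in N -> (a \in Bs1) && (y \in Bs2).
Proof. by move/subN; rewrite dsum_base_in. Qed.

(* Exchanging an element of the second component of a base of N never involves
   the first component, since bases of M1 are incomparable. *)
Lemma submatroid_exchange a b x y e :
  dsum_base a x \in N -> dsum_base b y \in N -> e \in x :\: y ->
  exists2 v, v \in y :\: x & dsum_base a (v |: (x :\ e)) \in N.
Proof.
move=> axN byN ex; have [_ exN] := mN.
have [|[w|v]] := exN _ _ axN byN (inr e); first by rewrite in_setD !in_dsum_base -in_setD.
  rewrite in_setD !in_dsum_base dsum_base_exchange_lr => /andP [wa _].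
  case/submatroid_factors/andP => waBs _.
  have aBs : a \in Bs1 by case/submatroid_factors/andP: axN.
  have a_eq := matroid_antichain m1 aBs waBs (subsetUr _ _).
  by move: wa; rewrite [in X in X -> _]a_eq setU11.
by rewrite in_setD !in_dsum_base dsum_base_exchange_r => /andP [vx vy] vN; exists v;
  rewrite // in_setD vx vy.
Qed.

(* If a (+) x and b (+) y are bases of N, so is a (+) y: exchange the elements
   of x \ y one at a time, by induction on #|x \ y|. *)
Lemma submatroid_rectangle a b x y :
  dsum_base a x \in N -> dsum_base b y \in N -> dsum_base a y \in N.
Proof.
move=> + byN; move: {2}#|x :\: y| (erefl #|x :\: y|) => n.
elim: n x => [|n IH] x xy axN.
  have yBs : y \in Bs2 by case/submatroid_factors/andP: byN.
  have xBs : x \in Bs2 by case/submatroid_factors/andP: axN.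
  have xy_sub : x \subset y by rewrite -setD_eq0 -cards_eq0 xy.
  by rewrite -(matroid_antichain m2 xBs yBs xy_sub).
have [e ex] : exists e, e \in x :\: y by apply/set0Pn; rewrite -card_gt0 xy.
have [v /setDP [vy vx] avN] := submatroid_exchange axN byN ex.
apply: IH avN; apply/eq_add_S; rewrite -xy (cardsD1 e (x :\: y)) ex add1n.
congr _.+1; apply: eq_card => z; rewrite !inE.
by case: eqP => [->|_]; rewrite /= ?vy ?andbF // andbCA.
Qed.

Lemma direct_sum_submatroid :
  exists (S : {set {set E1}}) (T : {set {set E2}}),
    [/\ S \subset Bs1, T \subset Bs2 & N = direct_sum_bases S T].
Proof.
exists [set a | [exists y, dsum_base a y \in N]], [set y | [exists a, dsum_base a y \in N]].
split.
- by apply/subsetP => a; rewrite inE => /existsP [y /submatroid_factors /andP []].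
- by apply/subsetP => y; rewrite inE => /existsP [a /submatroid_factors /andP []].
apply/setP => B; apply/idP/idP => [BN|/mem_direct_sum_bases [a [y []]]].
  have /mem_direct_sum_bases [a [y [_ _ BE]]] := subN BN; rewrite BE dsum_base_in !inE.
  by apply/andP; split; apply/existsP; [exists y | exists a]; rewrite -BE.
rewrite !inE => /existsP [x axN] /existsP [b byN] ->.
exact: submatroid_rectangle axN byN.
Qed.

End Submatroid.

Lemma rectangle_cover (X Y : finType) (A S1 S2 : {set X}) (B T1 T2 : {set Y}) :
  (forall a y, a \in A -> y \in B -> (a \in S1) && (y \in T1) || (a \in S2) && (y \in T2)) ->
  ~~ ((A \subset S1) && (B \subset T1)) -> ~~ ((A \subset S2) && (B \subset T2)) ->
  (A \subset S1) && (A \subset S2) || (B \subset T1) && (B \subset T2).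
Proof.
move=> cover proper1 proper2.
have full_side (S S' : {set X}) (T T' : {set Y}) :
    (forall a y, a \in A -> y \in B -> (a \in S) && (y \in T) || (a \in S') && (y \in T')) ->
    ~~ ((A \subset S') && (B \subset T')) -> ~~ (A \subset S) ->
    (B \subset T) && (B \subset T').
  move=> cov prop' /subsetPn [a aA aS].
  have BT' : B \subset T'.
    by apply/subsetP => y yB; have := cov a y aA yB; rewrite (negbTE aS) => /andP [].
  move: prop'; rewrite BT' !andbT => /subsetPn [a' a'A a'S'].
  apply/subsetP => y yB.
  by have := cov a' y a'A yB; rewrite (negbTE a'S') orbF => /andP [].
have [//|] := boolP ((A \subset S1) && (A \subset S2)).
rewrite negb_and => /orP [AS1|AS2]; apply/orP; right.
  exact: full_side proper2 AS1.
rewrite andbC; apply: full_side proper1 AS2 => a y aA yB.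
by rewrite orbC cover.
Qed.

Lemma direct_sum_split_shape (E1 E2 : finType) (A S1 S2 : {set {set E1}})
    (B T1 T2 : {set {set E2}}) :
  S1 \subset A -> S2 \subset A -> T1 \subset B -> T2 \subset B ->
  (forall D, D \in direct_sum_bases A B ->
     (D \in direct_sum_bases S1 T1) || (D \in direct_sum_bases S2 T2)) ->
  direct_sum_bases S1 T1 != direct_sum_bases A B ->
  direct_sum_bases S2 T2 != direct_sum_bases A B ->
  (S1 = A /\ S2 = A) \/ (T1 = B /\ T2 = B).
Proof.
move=> SA1 SA2 TB1 TB2 cover proper1 proper2.
have proper (S : {set {set E1}}) (T : {set {set E2}}) : S \subset A -> T \subset B ->
    direct_sum_bases S T != direct_sum_bases A B -> ~~ ((A \subset S) && (B \subset T)).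
  move=> SA TB; apply: contra => /andP [AS BT].
  by have [-> ->] : S = A /\ T = B by split; apply/eqP; rewrite eqEsubset ?SA ?TB.
have := @rectangle_cover _ _ A S1 S2 B T1 T2.
case/(_ _ (proper _ _ SA1 TB1 proper1) (proper _ _ SA2 TB2 proper2))/orP.
- by move=> a y aA yB; rewrite -!dsum_base_in; apply: cover; rewrite dsum_base_in aA.
- by case/andP=> AS1 AS2; left; split; apply/eqP; rewrite eqEsubset ?SA1 ?SA2.
by case/andP=> BT1 BT2; right; split; apply/eqP; rewrite eqEsubset ?TB1 ?TB2.
Qed.

(* Hyperplane splits transfer along a family of polytopes P(K S) fibred over
   P(S): a point x lies in P(K S) iff its projection pi x lies in P(S) and x
   satisfies a fixed condition Q; pi has a section lift landing in Q, and pi and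
   lift pull linear functionals back to (affine) linear functionals. *)
Section SplitTransfer.
Variables (R : realFieldType) (E E' : finType).
Variable K : {set {set E}} -> {set {set E'}}.
Variables (pi : (E' -> R) -> E -> R) (lift : (E -> R) -> E' -> R).
Variable Q : (E' -> R) -> Prop.
Hypothesis polytopeK :
  forall S x, base_polytope R (K S) x <-> base_polytope R S (pi x) /\ Q x.
Hypothesis liftK : forall x1, pi (lift x1) = x1.
Hypothesis Q_lift : forall x1, Q (lift x1).
Hypothesis pi_linear : forall c : E -> R,
  exists c' : E' -> R, forall x, \sum_i c' i * x i = \sum_i c i * pi x i.
Hypothesis lift_affine : forall c' : E' -> R,
  exists (c : E -> R) (k : R), forall x1, \sum_i c' i * lift x1 i = \sum_i c i * x1 i + k.
Hypothesis matroidK : forall S, is_matroid (K S) <-> is_matroid S.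

Lemma polytope_lift S x1 : base_polytope R (K S) (lift x1) <-> base_polytope R S x1.
Proof. by rewrite polytopeK liftK; split=> [[]|]. Qed.

(* A valid inequality for P(K S) restricts, through lift, to a valid affine
   inequality for P(S) cutting out the corresponding face, and conversely a
   valid inequality for P(S) pulls back through pi. *)
Lemma face_transfer S S1 S2 :
  is_face (base_polytope R (K S))
    (fun x => base_polytope R (K S1) x /\ base_polytope R (K S2) x) <->
  is_face (base_polytope R S) (fun x => base_polytope R S1 x /\ base_polytope R S2 x).
Proof.
split.
  case=> c' [b [valid faceE]]; have [c [k ck]] := lift_affine c'.
  exists c, (b - k); split=> [x1 /polytope_lift /valid|x1].
    by rewrite ck lerBrDr.
  rewrite -!polytope_lift faceE ck; split=> -[PS cE]; split=> //.
    by rewrite -cE addrK.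
  by rewrite cE subrK.
case=> c [b [valid faceE]]; have [c' cc'] := pi_linear c.
exists c', b; split=> [x /polytopeK [/valid]|x]; first by rewrite cc'.
by rewrite !polytopeK cc'; have := faceE (pi x); tauto.
Qed.

Lemma split_transfer B S1 S2 :
  hyperplane_split R (K B) (K S1) (K S2) <-> hyperplane_split R B S1 S2.
Proof.
have union_transfer :
    same_set (base_polytope R (K B))
      (fun x => base_polytope R (K S1) x \/ base_polytope R (K S2) x) <->
    same_set (base_polytope R B) (fun x => base_polytope R S1 x \/ base_polytope R S2 x).
  split=> union x; first by rewrite -!polytope_lift.
  by rewrite !polytopeK union; tauto.
by rewrite /hyperplane_split !matroidK union_transfer !face_transfer.
Qed.

End SplitTransfer.

Definition glue (R : Type) (E1 E2 : finType) (x1 : E1 -> R) (x2 : E2 -> R) :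
  (E1 + E2)%type -> R := fun i => match i with inl u => x1 u | inr v => x2 v end.

Section FactorSplits.
Variables (R : realFieldType) (E1 E2 : finType).

Lemma split_left_factor (Bs1 S1 S2 : {set {set E1}}) (Bs2 : {set {set E2}}) :
  is_matroid Bs2 ->
  hyperplane_split R (direct_sum_bases Bs1 Bs2)
    (direct_sum_bases S1 Bs2) (direct_sum_bases S2 Bs2) <->
  hyperplane_split R Bs1 S1 S2.
Proof.
move=> m2; have [/set0Pn [y0 y0B] _] := m2.
apply: (split_transfer (K := fun S => direct_sum_bases S Bs2)
  (pi := fun x u => x (inl u)) (lift := fun x1 => glue x1 (indicator R y0))
  (Q := fun x => base_polytope R Bs2 (fun v => x (inr v)))).
- by move=> S x; apply: base_polytope_direct_sum.
- by [].
- by move=> x1; apply: indicator_base_polytope.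
- move=> c; exists (glue c (fun _ => 0)) => x.
  by rewrite big_sumType /= [X in _ + X]big1 ?addr0 // => v _; rewrite mul0r.
- move=> c'; exists (fun u => c' (inl u)), (\sum_v c' (inr v) * indicator R y0 v) => x1.
  by rewrite big_sumType.
- move=> S; split=> [/direct_sum_matroid_factors [] //|mS].
  exact: direct_sum_matroid.
Qed.

Lemma split_right_factor (Bs1 : {set {set E1}}) (Bs2 S1 S2 : {set {set E2}}) :
  is_matroid Bs1 ->
  hyperplane_split R (direct_sum_bases Bs1 Bs2)
    (direct_sum_bases Bs1 S1) (direct_sum_bases Bs1 S2) <->
  hyperplane_split R Bs2 S1 S2.
Proof.
move=> m1; have [/set0Pn [a0 a0B] _] := m1.
apply: (split_transfer (K := fun S => direct_sum_bases Bs1 S)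
  (pi := fun x v => x (inr v)) (lift := fun x2 => glue (indicator R a0) x2)
  (Q := fun x => base_polytope R Bs1 (fun u => x (inl u)))).
- by move=> S x; rewrite base_polytope_direct_sum; tauto.
- by [].
- by move=> x2; apply: indicator_base_polytope.
- move=> c; exists (glue (fun _ => 0) c) => x.
  by rewrite big_sumType /= [X in X + _]big1 ?add0r // => u _; rewrite mul0r.
- move=> c'; exists (fun v => c' (inr v)), (\sum_u c' (inl u) * indicator R a0 u) => x2.
  by rewrite big_sumType addrC.
- move=> S; split=> [/direct_sum_matroid_factors [] //|mS].
  exact: direct_sum_matroid.
Qed.

End FactorSplits.

Theorem theorem2 (R : realFieldType) (E1 E2 : finType)
  (Bs1 : {set {set E1}}) (Bs2 : {set {set E2}}) :
  is_matroid Bs1 -> is_matroid Bs2 ->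
  (has_nontrivial_hyperplane_split R (direct_sum_bases Bs1 Bs2) <->
   has_nontrivial_hyperplane_split R Bs1 \/ has_nontrivial_hyperplane_split R Bs2).
Proof.
move=> m1 m2; have [nz1 _] := m1; have [nz2 _] := m2; rewrite !nontrivial_splitE.
split; last first.
  case=> -[N1 [N2 [hs n1 n2]]].
    exists (direct_sum_bases N1 Bs2), (direct_sum_bases N2 Bs2).
    by rewrite !direct_sum_bases_inj_l //; split=> //; apply/split_left_factor.
  exists (direct_sum_bases Bs1 N1), (direct_sum_bases Bs1 N2).
  by rewrite !direct_sum_bases_inj_r //; split=> //; apply/split_right_factor.
case=> N1 [N2 [hs n1 n2]]; have [mN1 [mN2 _]] := hs.
have [sub1 sub2 cover] := split_bases hs.
have [S1 [T1 [SB1 TB1 N1E]]] := direct_sum_submatroid m1 m2 mN1 sub1.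
have [S2 [T2 [SB2 TB2 N2E]]] := direct_sum_submatroid m1 m2 mN2 sub2.
subst N1 N2.
case: (direct_sum_split_shape SB1 SB2 TB1 TB2 cover n1 n2) => -[eS1 eS2]; subst.
  right; exists T1, T2; split; first exact/(split_right_factor _ _ _ _ m1).
    by rewrite -(direct_sum_bases_inj_r T1 Bs2 nz1).
  by rewrite -(direct_sum_bases_inj_r T2 Bs2 nz1).
left; exists S1, S2; split; first exact/(split_left_factor _ _ _ _ m2).
  by rewrite -(direct_sum_bases_inj_l S1 Bs1 nz2).
by rewrite -(direct_sum_bases_inj_l S2 Bs1 nz2).
Qed.
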